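(* The following randomized mechanism obtains a $4$-approximation to the optimal social welfare for bidders with additive valuations, i.e., for every profile of additive valuations, its expected welfare (when bidders act truthfully) is at least $\mathrm{OPT}/4$. Index the bidders in an arbitrary fixed order. Independently place each bidder in a set $S$ with probability $1/2$ and in a set $U$ otherwise. Bidders in $S$ receive nothing and report their value for each item. For each item $j$, set price $p_j=\max_{i\in S}v_{ij}$ and let $n(j)$ be the smallest index among bidders in $\arg\max_{i\in S}v_{ij}$. Then, for each $i\in U$ in an arbitrary order, bidder $i$ purchases all previously unsold items $j$ for which either $v_{ij}>p_j$, or $v_{ij}=p_j$ and $i$ has a lower index than $n(j)$.
   Context: Combinatorial auction with item set $M$ and bidder set $N$; bidder $i$ has an additive valuation: values $v_{ij}\ge0$ with $v_i(A)=\sum_{j\in A}v_{ij}$. $\mathrm{OPT}$ is the maximum over allocations of disjoint bundles $(T_1,\dots,T_n)$ of $\sum_i v_i(T_i)$. Truthful behavior of a bidder in $U$ means purchasing exactly the items described; bidders in $S$ report their true values. The expectation is over the random placement of bidders. *)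

From HB Require Import structures.
From mathcomp Require Import all_boot all_order all_algebra.
Set Implicit Arguments. Unset Strict Implicit. Unset Printing Implicit Defensive.
Import Order.TTheory GRing.Theory Num.Theory.
Local Open Scope ring_scope.

(* Bidders are 'I_n (indexed in the fixed order 0 < 1 < ... < n-1),
   items are 'I_m; v i j is the additive value of bidder i for item j. *)
Section Auction.
Variables (R : realFieldType) (n m : nat) (v : 'I_n -> 'I_m -> R).

Definition valuation (i : 'I_n) (A : {set 'I_m}) : R := \sum_(j in A) v i j.

(* An allocation of disjoint bundles: each item goes to at most one bidder. *)
Definition bundle (a : {ffun 'I_m -> option 'I_n}) (i : 'I_n) : {set 'I_m} :=
  [set j | a j == Some i].
Definition alloc_welfare (a : {ffun 'I_m -> option 'I_n}) : R :=
  \sum_(i < n) valuation i (bundle a i).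
Definition OPT : R :=
  \big[Num.max/0]_(a : {ffun 'I_m -> option 'I_n}) alloc_welfare a.

(* Price p_j = max_{i in S} v_ij (0 if S is empty). *)
Definition price (S : {set 'I_n}) (j : 'I_m) : R :=
  \big[Num.max/0]_(i in S) v i j.

Definition nj (S : {set 'I_n}) (j : 'I_m) : option 'I_n :=
  [pick i in S | (v i j == price S j) &&
     [forall k in S, (v k j == price S j) ==> (i <= k)%N]].

Definition qualifies (S : {set 'I_n}) (i : 'I_n) (j : 'I_m) : bool :=
  (price S j < v i j) ||
  ((v i j == price S j) && (if nj S j is Some k then (i < k)%N else false)).

Fixpoint run (S : {set 'I_n}) (s : seq 'I_n) (unsold : {set 'I_m}) : R :=
  match s with
  | [::] => 0
  | i :: s' =>
      let B := [set j in unsold | qualifies S i j] in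
      valuation i B + run S s' (unsold :\: B)
  end.

(* welfare of the mechanism for placement S, where U = ~: S is processed
   in the order ord S (a permutation of U) *)
Definition mech_welfare (ord : {set 'I_n} -> seq 'I_n) (S : {set 'I_n}) : R :=
  run S (ord S) setT.

Definition placement_prob (S : {set 'I_n}) : R :=
  (1 / 2) ^+ #|S| * (1 - 1 / 2) ^+ #|~: S|.

Definition expected_welfare (ord : {set 'I_n} -> seq 'I_n) : R :=
  \sum_(S : {set 'I_n}) placement_prob S * mech_welfare ord S.

End Auction.

From HB Require Import structures.
From mathcomp Require Import all_boot all_order all_algebra.
From mathcomp Require Import ring lra.
Set Implicit Arguments. Unset Strict Implicit. Unset Printing Implicit Defensive.
Import Order.TTheory GRing.Theory Num.Theory.
Local Open Scope ring_scope.

(* Fix an item j, let i* be its top bidder (highest value, ties broken by the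
   smaller index) and i2 the runner-up.  Whenever i* is in U and i2 is in S, the
   price of j is v_{i2 j}, bidder i* wants j and no other U-bidder does, so j is
   sold to i* for a welfare of v_{i* j}.  Toggling the membership of i* and of
   i2 are two commuting involutions on placements; every orbit (of size at most
   4) contains such a placement and placements are uniform, so item j contributes
   at least v_{i* j} / 4 to the expected welfare, while it contributes at most
   v_{i* j} to the welfare of any allocation. *)

Definition outranks (R : realDomainType) (n : nat) (w : 'I_n -> R) : rel 'I_n :=
  fun a b => (w b < w a) || ((w b == w a) && (a <= b)%N).

Section Outranks.
Variables (R : realDomainType) (n : nat) (w : 'I_n -> R).

Lemma outranks_refl : reflexive (outranks w).
Proof. by move=> a; rewrite /outranks eqxx leqnn orbT. Qed.

Lemma outranks_trans : transitive (outranks w).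
Proof.
move=> b a c; rewrite /outranks.
move=> /orP[ab|/andP[/eqP ab lab]] /orP[bc|/andP[/eqP bc lbc]].
- by rewrite (lt_trans bc ab).
- by rewrite bc ab.
- by rewrite -ab bc.
- by rewrite bc ab eqxx (leq_trans lab lbc) orbT.
Qed.

Lemma outranks_total : total (outranks w).
Proof.
move=> a b; rewrite /outranks.
case: (ltgtP (w a) (w b)) => [||e] /=; rewrite ?orbT //.
by case: (leqP a b) => // /ltnW ->; rewrite !orbT.
Qed.

Lemma outranks_le a b : outranks w a b -> w b <= w a.
Proof. by move=> /orP[/ltW //|/andP[/eqP -> _]]. Qed.

Lemma exists_outranks_all (P : pred 'I_n) i0 : P i0 ->
  exists2 a, P a & forall b, P b -> outranks w a b.
Proof.
move=> Pi0; have [a Pa a_top] :=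
  extremumP id outranks_refl outranks_trans outranks_total Pi0.
by exists a.
Qed.

End Outranks.

Definition toggle (n : nat) (a : 'I_n) (S : {set 'I_n}) : {set 'I_n} :=
  if a \in S then S :\ a else a |: S.

Lemma in_toggle (n : nat) (a x : 'I_n) (S : {set 'I_n}) :
  (x \in toggle a S) = if x == a then a \notin S else x \in S.
Proof.
rewrite /toggle; case: (eqVneq x a) => [->|xa]; case: ifP => aS;
  by rewrite !inE ?eqxx ?aS ?(negbTE xa).
Qed.

Lemma toggleK (n : nat) (a : 'I_n) : involutive (toggle a).
Proof.
move=> S; apply/setP => x; rewrite !in_toggle.
by case: (eqVneq x a) => [->|] //; rewrite eqxx negbK.
Qed.

(* Averaging over the orbits of the group generated by two involutions. *)
Lemma involutions_sum_ge (R : realFieldType) (T : finType) (W : T -> R) (c : R)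
    (t1 t2 : T -> T) (E : pred T) :
  involutive t1 -> involutive t2 -> (forall x, 0 <= W x) ->
  (forall x, E x -> c <= W x) ->
  (forall x, [|| E x, E (t1 x), E (t2 x) | E (t2 (t1 x))]) ->
  #|T|%:R * c <= 4 * \sum_x W x.
Proof.
move=> t1K t2K W_ge0 EW cover.
have e1 : \sum_x W x = \sum_x W (t1 x) := reindex_inj (inv_inj t1K).
have e2 : \sum_x W x = \sum_x W (t2 x) := reindex_inj (inv_inj t2K).
have e12 : \sum_x W x = \sum_x W (t2 (t1 x)) :=
  reindex_inj (inj_comp (inv_inj t2K) (inv_inj t1K)).
have -> : 4 * \sum_x W x = \sum_x (W x + W (t1 x) + W (t2 x) + W (t2 (t1 x))).
  by rewrite !big_split /= -e1 -e2 -e12; ring.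
rewrite mulr_natl -sumr_const; apply: ler_sum => x _.
have := W_ge0 x; have := W_ge0 (t1 x); have := W_ge0 (t2 x).
have := W_ge0 (t2 (t1 x)).
by case/or4P: (cover x) => /EW; lra.
Qed.

Section SoldValue.
Variables (R : realFieldType) (n m : nat) (v : 'I_n -> 'I_m -> R).
Variable S : {set 'I_n}.

Fixpoint sold_value (s : seq 'I_n) (j : 'I_m) : R :=
  if s is i :: s' then
    if qualifies v S i j then v i j else sold_value s' j
  else 0.

Lemma run_sold_value s (U : {set 'I_m}) :
  run v S s U = \sum_(j in U) sold_value s j.
Proof.
elim: s U => [|i s IH] U /=; first by rewrite big1.
rewrite IH /valuation (bigID (qualifies v S i) (mem U)) /=.
congr (_ + _); symmetry.
  by apply: eq_big => [j|j /andP[_ ->]] //; rewrite inE.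
apply: eq_big => [j|j /andP[_ /negbTE ->]] //; rewrite !inE.
by case: (j \in U); case: (qualifies v S i j).
Qed.

Lemma sold_value_ge0 s j : (forall i, 0 <= v i j) -> 0 <= sold_value s j.
Proof. by move=> v_ge0; elim: s => [|i s IH] //=; case: ifP. Qed.

Lemma sold_value_only k s j :
    (forall i, i \in s -> i != k -> ~~ qualifies v S i j) ->
  sold_value s j = if (k \in s) && qualifies v S k j then v k j else 0.
Proof.
elim: s => [|i s IH] //= only_k; rewrite inE.
have {}IH := IH (fun i' s_i' => only_k i' (predU1r _ _ s_i')).
case: (eqVneq k i) => [<-|ki] /=.
  by case: ifP => // q; rewrite IH // q andbF.
by rewrite (negbTE (only_k i (mem_head _ _) _)) 1?eq_sym.
Qed.

End SoldValue.

Section TopBidder.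
Variables (R : realFieldType) (n m : nat) (v : 'I_n -> 'I_m -> R) (j : 'I_m).
Hypothesis v_ge0 : forall i, 0 <= v i j.
Variables (top : 'I_n) (S : {set 'I_n}).
Hypothesis top_notin : top \notin S.

Lemma sold_value_sole_bidder s : top \in s ->
  (forall k, k = top) -> sold_value v S s j = v top j.
Proof.
move=> top_s all_top; rewrite (sold_value_only (k := top)); last first.
  by move=> i _; rewrite (all_top i) eqxx.
rewrite top_s /qualifies /=.
have -> : price v S j = 0.
  rewrite /price big_pred0 // => i; apply: contraNF top_notin.
  by rewrite (all_top i).
case: ifP => // /negbT; rewrite negb_or -leNgt => /andP[v_le0 _].
by apply/eqP; rewrite eq_le v_le0 v_ge0.
Qed.

Variable second : 'I_n.
Hypothesis top_outranks : forall k, outranks (v^~ j) top k.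
Hypothesis second_outranks : forall k, k != top -> outranks (v^~ j) second k.
Hypothesis second_in : second \in S.

Let others_notin k : k \in S -> k != top.
Proof. by apply: contraTneq => ->. Qed.

Lemma price_runner_up : price v S j = v second j.
Proof.
apply/eqP; rewrite eq_le; apply/andP; split; last exact: le_bigmax_cond.
apply: bigmax_le => // i /others_notin/second_outranks; exact: outranks_le.
Qed.

Lemma nj_runner_up :
  exists k, [/\ nj v S j = Some k, k \in S, v k j = v second j & (k <= second)%N].
Proof.
rewrite /nj price_runner_up.
case: pickP => [k /andP[kS /andP[/eqP vk /forall_inP min_k]]|none].
  by have := min_k second second_in; rewrite eqxx /= => k_le; exists k.
have := none second; rewrite second_in eqxx /= => /negbT/negP; case.
apply/forall_inP => k /others_notin/second_outranks; apply: contraLR.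
rewrite negb_imply => /andP[/eqP vk /negbTE k_lt].
by rewrite /outranks /= vk ltxx eqxx k_lt.
Qed.

Lemma top_qualifies : qualifies v S top j.
Proof.
rewrite /qualifies price_runner_up.
have [k [-> /others_notin k_top vk k_le]] := nj_runner_up.
have /orP[-> //|/andP[/eqP v_eq _]] := top_outranks second.
rewrite v_eq eqxx /= ltn_neqAle.
have := top_outranks k; rewrite /outranks vk v_eq ltxx eqxx /= => ->.
by rewrite andbT; apply: contra k_top => /eqP/val_inj ->.
Qed.

Lemma others_not_qualify i : i != top -> ~~ qualifies v S i j.
Proof.
move=> /second_outranks; rewrite /qualifies price_runner_up.
have [k [-> _ _ k_le]] := nj_runner_up.
move=> /orP[lt|/andP[/eqP -> le]]; first by rewrite ltNge (ltW lt) (lt_eqF lt).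
by rewrite ltxx eqxx /= -leqNgt (leq_trans k_le le).
Qed.

Lemma sold_value_top_runner_up s : top \in s -> sold_value v S s j = v top j.
Proof.
move=> top_s; rewrite (sold_value_only (k := top)) ?top_s ?top_qualifies //.
by move=> i _; apply: others_not_qualify.
Qed.

End TopBidder.

Section ItemBound.
Variables (R : realFieldType) (n m : nat) (v : 'I_n -> 'I_m -> R).
Hypothesis v_ge0 : forall i j, 0 <= v i j.
Variable ord : {set 'I_n} -> seq 'I_n.
Hypothesis ord_perm : forall S : {set 'I_n}, perm_eq (ord S) (enum (~: S)).

Let mem_ord S i : (i \in ord S) = (i \notin S).
Proof. by rewrite (perm_mem (ord_perm S)) mem_enum inE. Qed.

Lemma sum_sold_value_ge j i0 :
  #|{set 'I_n}|%:R * v i0 j <= 4 * \sum_(S : {set 'I_n}) sold_value v S (ord S) j.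
Proof.
have [top _ top_outranks] :=
  exists_outranks_all (v^~ j) (P := xpredT) (i0 := i0) isT.
have {}top_outranks k := top_outranks k isT.
apply: le_trans (_ : #|{set 'I_n}|%:R * v top j <= _).
  by rewrite ler_wpM2l ?ler0n // (outranks_le (top_outranks i0)).
pose W S := sold_value v S (ord S) j.
have W_ge0 S : 0 <= W S by apply: sold_value_ge0.
case: (pickP (predC1 top)) => [k k_top|all_top].
  have [second /= second_top second_outranks] :=
    exists_outranks_all (v^~ j) k_top.
  apply: (involutions_sum_ge (W := W) (c := v top j)
    (toggleK top) (toggleK second) W_ge0
    (E := fun S => (top \notin S) && (second \in S))).
    move=> S /andP[top_notin second_in].
    rewrite /W (sold_value_top_runner_up (v_ge0^~ j) top_notin top_outranks
      second_outranks second_in) ?mem_ord //.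
  move=> S /=; rewrite !in_toggle !eqxx (negbTE second_top).
  rewrite eq_sym (negbTE second_top).
  by case: (top \in S); case: (second \in S).
have {}all_top k : k = top by apply/eqP/negbFE/all_top.
apply: (involutions_sum_ge (W := W) (c := v top j)
  (toggleK top) (toggleK top) W_ge0 (E := fun S => top \notin S)).
  move=> S top_notin.
  by rewrite /W (sold_value_sole_bidder (v_ge0^~ j) top_notin) ?mem_ord.
by move=> S /=; rewrite !in_toggle eqxx; case: (top \in S).
Qed.

End ItemBound.

Lemma placement_probE (R : realFieldType) (n : nat) (S : {set 'I_n}) :
  placement_prob R S = #|{set 'I_n}|%:R^-1.
Proof.
rewrite /placement_prob (_ : 1 - 1 / 2 = 1 / 2 :> R); last by lra.
rewrite -exprD cardsC card_ord div1r exprVn -natrX.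
by rewrite -cardsT -powersetT card_powerset cardsT card_ord.
Qed.

Lemma expected_welfareE (R : realFieldType) (n m : nat) (v : 'I_n -> 'I_m -> R)
    (ord : {set 'I_n} -> seq 'I_n) :
  expected_welfare v ord =
  \sum_j (\sum_(S : {set 'I_n}) sold_value v S (ord S) j) / #|{set 'I_n}|%:R.
Proof.
rewrite /expected_welfare.
under eq_bigr => S _.
  rewrite placement_probE /mech_welfare run_sold_value mulr_sumr.
  under eq_bigl => j do rewrite inE.
over.
by rewrite exchange_big /=; apply: eq_bigr => j _; rewrite -mulr_sumr mulrC.
Qed.

Lemma OPT_le_sum (R : realFieldType) (n m : nat) (v : 'I_n -> 'I_m -> R)
    (b : 'I_m -> R) :
  (forall j, 0 <= b j) -> (forall i j, v i j <= b j) -> OPT v <= \sum_j b j.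
Proof.
move=> b_ge0 v_le_b; apply: bigmax_le => [|a _]; first exact: sumr_ge0.
rewrite /alloc_welfare /valuation.
under eq_bigr => i _ do rewrite big_mkcond /=.
rewrite exchange_big /=; apply: ler_sum => j _.
under eq_bigr => i _ do rewrite inE.
case: (a j) => [i0|]; last by rewrite big1.
rewrite (bigD1 i0) //= eqxx big1 ?addr0 ?v_le_b // => i i_i0.
by case: eqP => // -[e]; rewrite e eqxx in i_i0.
Qed.

Theorem lemma4p3 (R : realFieldType) (n m : nat) (v : 'I_n -> 'I_m -> R)
  (v_ge0 : forall i j, 0 <= v i j)
  (ord : {set 'I_n} -> seq 'I_n)
  (ord_perm : forall S : {set 'I_n}, perm_eq (ord S) (enum (~: S))) :
  OPT v / 4 <= expected_welfare v ord.
Proof.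
rewrite expected_welfareE.
set N : R := #|{set 'I_n}|%:R.
set W := fun j => \sum_(S : {set 'I_n}) sold_value v S (ord S) j.
have N_gt0 : 0 < N by rewrite ltr0n; apply/card_gt0P; exists set0.
have W_ge0 j : 0 <= W j.
  by apply: sumr_ge0 => S _; apply: sold_value_ge0 => i; apply: v_ge0.
have : OPT v <= \sum_j 4 * (W j / N).
  apply: OPT_le_sum => [j|i j]; first by rewrite mulr_ge0 // divr_ge0 // ltW.
  by rewrite mulrA ler_pdivlMr // mulrC; apply: sum_sold_value_ge.
rewrite -mulr_sumr; lra.
Qed.
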